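(* Let $n\ge 3$ be an integer, let $d_0,\dots,d_{n-1}>0$ be real numbers (indices taken modulo $n$), and let $\lambda\in(\tfrac14,1)$. Define $$\alpha_j=\frac{1}{n}\,\frac{d_{j-1}d_{j+2}}{(d_{j-1}+d_{j+1})(d_j+d_{j+2})},\qquad \beta_i=\frac{d_{i-1}(d_{i-2}+d_{i+2})+d_{i+2}(d_{i-1}+d_{i+3})}{\sum_{k=0}^{n-1}(d_k+d_{k+2})(d_{k-1}+d_{k+3})},$$ and the $n\times n$ matrix $Q_n=(Q_{i,j})_{i,j=0}^{n-1}$ by $$Q_{i,j}=\begin{cases}(1-\lambda)\beta_j+2\lambda\alpha_i\left(1+2\cos\frac{2(j-i)\pi}{n}\right), & j\neq i,\\[2pt] \lambda+(1-\lambda)\beta_i-2(n-3)\lambda\alpha_i, & j=i.\end{cases}$$ Then $1$ is an eigenvalue of $Q_n$, $\lambda$ is an eigenvalue of $Q_n$ of multiplicity two, and the remaining $n-3$ eigenvalues $\lambda_4,\dots,\lambda_n$ of $Q_n$ (counted with multiplicity) satisfy $|\lambda_k|<\lambda$; i.e. $\lambda_1=1>\lambda_2=\lambda_3=\lambda>|\lambda_k|$ for $k=4,\dots,n$.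
   Context: $Q_n$ is the block of the subdivision matrix of a (tuned hybrid non-uniform) subdivision scheme acting on the $n$ vertices of the polygonal face surrounding an extraordinary vertex of valence $n$, where $d_j$ are the knot intervals of the edges around that face and $\lambda$ is the tuning parameter. Note $\beta_i$ is the coefficient of $P_i$ in $C=\frac{\sum_{i}(d_iP_{i+1}+d_{i+2}P_i)(d_{i-1}+d_{i+3})}{\sum_j(d_j+d_{j+2})(d_{j-1}+d_{j+3})}$. *)

From HB Require Import structures.
From mathcomp Require Import all_boot all_order all_algebra.
From mathcomp Require Import reals trigo.
From mathcomp Require Import complex.
Set Implicit Arguments. Unset Strict Implicit. Unset Printing Implicit Defensive.
Import Order.TTheory GRing.Theory Num.Theory.
Local Open Scope ring_scope.

Section QDefs.
Variables (R : realType) (n : nat) (d : nat -> R) (lam : R).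

Definition dm (k : nat) : R := d (k %% n)%N.

(* alpha_j = 1/n * d_{j-1} d_{j+2} / ((d_{j-1}+d_{j+1})(d_j+d_{j+2})) ;
   j-1 is encoded as j+n-1 (mod n) *)
Definition alpha (j : nat) : R :=
  n%:R^-1 * (dm (j + n - 1) * dm (j + 2)) /
  ((dm (j + n - 1) + dm (j + 1)) * (dm j + dm (j + 2))).

Definition beta_den : R :=
  \sum_(k < n) (dm k + dm (k + 2)) * (dm (k + n - 1) + dm (k + 3)).

Definition beta (i : nat) : R :=
  (dm (i + n - 1) * (dm (i + n - 2) + dm (i + 2))
   + dm (i + 2) * (dm (i + n - 1) + dm (i + 3))) / beta_den.

Definition Qmat : 'M[R]_n :=
  \matrix_(i < n, j < n)
    if i == j then lam + (1 - lam) * beta i - 2 * (n%:R - 3) * lam * alpha i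
    else (1 - lam) * beta j
         + 2 * lam * alpha i
           * (1 + 2 * cos (2 * (((j : int) - (i : int))%:~R) * pi / n%:R)).

End QDefs.

From HB Require Import structures.
From mathcomp Require Import all_boot all_order all_algebra.
From mathcomp Require Import reals trigo.
From mathcomp Require Import complex.
From mathcomp Require Import ring lra zify.
Set Implicit Arguments. Unset Strict Implicit. Unset Printing Implicit Defensive.
Import Order.TTheory GRing.Theory Num.Theory.
Local Open Scope ring_scope.

(* Let t = 2 pi / n and let V be the n x 3 matrix with rows [1, cos (j t), sin (j t)].
   As 1 + 2 cos ((j - i) t) = 1 + 2 (cos (i t) cos (j t) + sin (i t) sin (j t)), Q_n is
   D + V P + E V^T with D diagonal, D_jj = lam (1 - 2 n alpha_j). The orthogonality
   relations V^T V = diag (n, n/2, n/2) give Q_n V = V T with T upper triangular with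
   diagonal 1, lam, lam (the 1 because the beta_j sum to 1). Completing V to a basis
   splits char Q_n = char T * char B, and each eigenvalue z of B has a complex left
   eigenvector u of Q_n with u V = 0. Pairing u Q_n = z u with the conjugate of u kills
   V P and E V^T, so z is the average of the D_jj weighted by the |u_j|^2; since
   0 < n alpha_j < 1 these lie in (-lam, lam). *)

Lemma det_mx33 (K : comPzRingType) (g : nat -> nat -> K) :
  \det (\matrix_(i < 3, j < 3) g i j) =
    g 0 0 * (g 1 1 * g 2 2 - g 1 2 * g 2 1)
  - g 0 1 * (g 1 0 * g 2 2 - g 1 2 * g 2 0)
  + g 0 2 * (g 1 0 * g 2 1 - g 1 1 * g 2 0).
Proof.
rewrite (expand_det_row _ 0) !big_ord_recl big_ord0 /cofactor.
rewrite !(expand_det_row _ 0) !big_ord_recl !big_ord0 /cofactor !det_mx11 !mxE /=.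
rewrite /bump /=; ring.
Qed.

Lemma char_poly_trmx (K : comNzRingType) m (A : 'M[K]_m) :
  char_poly A^T = char_poly A.
Proof.
by rewrite /char_poly /char_poly_mx -[RHS]det_tr raddfB /= tr_scalar_mx map_trmx.
Qed.

Lemma char_poly_ublock (K : comNzRingType) m1 m2 (A : 'M[K]_m1) (Y : 'M[K]_(m1, m2))
    (B : 'M[K]_m2) :
  char_poly (block_mx A Y 0 B) = char_poly A * char_poly B.
Proof.
rewrite /char_poly /char_poly_mx map_block_mx (scalar_mx_block m1 m2).
by rewrite opp_block_mx add_block_mx /= map_mx0 oppr0 addr0 det_ublock.
Qed.

Lemma char_poly_similar (F : fieldType) m (S A : 'M[F]_m) : S \in unitmx ->
  char_poly (invmx S *m A *m S) = char_poly A.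
Proof.
move=> S_unit; set Sp := map_mx polyC S; set Sp' := map_mx polyC (invmx S).
have SpK : Sp' *m Sp = 1%:M by rewrite -map_mxM mulVmx // map_mx1.
have X_conj : 'X%:M = Sp' *m 'X%:M *m Sp by rewrite scalar_mxC -mulmxA SpK mulmx1.
rewrite /char_poly /char_poly_mx !map_mxM -/Sp -/Sp' [in LHS]X_conj.
by rewrite -mulmxBl -mulmxBr !det_mulmx mulrAC -det_mulmx SpK det1 mul1r.
Qed.

Lemma form_on_annihilator (K : comPzRingType) m p (D : 'M[K]_m) (V E : 'M[K]_(m, p))
    (P : 'M[K]_(p, m)) (u v : 'rV[K]_m) :
  u *m V = 0 -> v *m V = 0 -> u *m (D + V *m P + E *m V^T) *m v^T = u *m D *m v^T.
Proof.
move=> uV vV; rewrite !mulmxDr !mulmxDl !mulmxA uV !mul0mx addr0.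
by rewrite -(mulmxA _ V^T) -trmx_mul vV trmx0 mulmx0 addr0.
Qed.

Lemma norm_weighted_sum_lt (K : numDomainType) m (a w : 'I_m -> K) (c : K)
    (j0 : 'I_m) :
  (forall j, `|a j| < c) -> (forall j, 0 <= w j) -> 0 < w j0 ->
  `|\sum_j a j * w j| < c * \sum_j w j.
Proof.
move=> a_lt w_ge0 wj0_gt0; rewrite mulr_sumr.
apply: le_lt_trans (ler_norm_sum _ _ _) _.
rewrite [ltLHS](bigD1 j0) // [ltRHS](bigD1 j0) //=.
apply: ltr_leD; first by rewrite normrM (ger0_norm (w_ge0 j0)) ltr_pM2r.
by apply: ler_sum => j _; rewrite normrM (ger0_norm (w_ge0 j)) ler_wpM2r // ltW.
Qed.

Lemma char_poly_invariant_split (F K : fieldType) (f : {rmorphism F -> K}) p m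
    (Q : 'M[F]_(p + m)) (V : 'M[F]_(p + m, p)) (T : 'M[F]_p) :
  \det (usubmx V) != 0 -> Q *m V = V *m T ->
  exists B : 'M[F]_m,
    char_poly Q = char_poly T * char_poly B /\
    forall z, root (map_poly f (char_poly B)) z ->
      exists2 u : 'rV[K]_(p + m), u != 0 &
        u *m map_mx f Q = z *: u /\ u *m map_mx f V = 0.
Proof.
move=> detV QV.
pose S := block_mx (usubmx V) 0 (dsubmx V) 1%:M.
have S_unit : S \in unitmx by rewrite unitmxE det_lblock det1 mulr1 unitfE.
have SV : S *m col_mx 1%:M 0 = V.
  by rewrite mul_block_col !mulmx1 !mulmx0 !addr0 vsubmxK.
pose M := invmx S *m Q *m S.
have M_ublock : M = block_mx T (ursubmx M) 0 (drsubmx M).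
  have : M *m col_mx 1%:M 0 = col_mx T 0.
    by rewrite /M -!mulmxA SV QV -SV mulmxA mulKmx // mul_col_mx mul1mx mul0mx.
  rewrite -{1}[M]submxK mul_block_col !mulmx1 !mulmx0 !addr0.
  by case/eq_col_mx => <- <-; rewrite submxK.
exists (drsubmx M); split.
  by rewrite -(char_poly_similar Q S_unit) -/M {1}M_ublock char_poly_ublock.
move=> z; rewrite map_char_poly -eigenvalue_root_char => /eigenvalueP [v vB v_neq0].
pose Sf := map_mx f S.
have Sf_unit : Sf \in unitmx by rewrite map_unitmx.
have Qf : map_mx f Q = Sf *m map_mx f M *m invmx Sf.
  by rewrite /M !map_mxM map_invmx !mulmxA mulmxV // mul1mx mulmxK.
exists (row_mx 0 v *m invmx Sf); last split.
- apply: contraNneq v_neq0 => /(congr1 (mulmx^~ Sf)).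
  by rewrite mulmxKV // mul0mx => /eqP; rewrite row_mx_eq0 => /andP[].
- rewrite Qf !mulmxA mulmxKV // M_ublock map_block_mx map_mx0 mul_row_block.
  by rewrite !mul0mx mulmx0 !add0r vB scalemxAl scale_row_mx scaler0.
- rewrite -SV map_mxM mulmxA mulmxKV // map_col_mx map_mx1 map_mx0 mul_row_col.
  by rewrite mul0mx mulmx0 addr0.
Qed.

Section Hermitian.
Variable R : rcfType.
Local Notation toC := (real_complex R).

Lemma annihilator_eigenvalue_lt m p (delta : 'rV[R]_m) (V E : 'M[R]_(m, p))
    (P : 'M[R]_(p, m)) (c : R) (u : 'rV[R[i]]_m) (z : R[i]) :
  (forall j, `|delta 0 j| < c) -> u != 0 -> u *m map_mx toC V = 0 ->
  u *m map_mx toC (diag_mx delta + V *m P + E *m V^T) = z *: u -> `|z| < c%:C%C.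
Proof.
move=> delta_lt u_neq0 uV uQ.
have [j0 uj0] : exists j, u 0 j != 0.
  apply/existsP; apply: contraR u_neq0 => /existsPn u0.
  by apply/eqP/rowP => j; rewrite mxE; apply/eqP/negPn/u0.
pose v := map_mx conjc u.
have vV : v *m map_mx toC V = 0.
  have VJ : map_mx conjc (map_mx toC V) = map_mx toC V.
    by rewrite -map_mx_comp; apply/eq_map_mx => x; apply: conjc_real.
  by rewrite -VJ -map_mxM uV map_mx0.
have := form_on_annihilator (map_mx toC (diag_mx delta)) (map_mx toC E)
  (map_mx toC P) uV vV.
rewrite map_trmx -!map_mxM -!map_mxD uQ => /(congr1 (fun A : 'M_1 => A 0 0)).
rewrite map_diag_mx mul_mx_diag -scalemxAl !mxE.
under eq_bigr do rewrite !mxE.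
under [in RHS]eq_bigr do rewrite !mxE mulrAC mulrC.
set w := fun j => u 0 j * (u 0 j)^*%C.
have w_ge0 j : 0 <= w j by apply: mulcJ_ge0.
have wj0_gt0 : 0 < w j0 by rewrite lt0r w_ge0 andbT mulf_neq0 // conjc_eq0.
have sumw_gt0 : 0 < \sum_j w j.
  by rewrite (bigD1 j0) //= ltr_wpDr // sumr_ge0.
move=> zw; rewrite -(ltr_pM2r sumw_gt0) -{1}(ger0_norm (ltW sumw_gt0)) -normrM zw.
apply: (norm_weighted_sum_lt (j0 := j0)) => // j.
by rewrite normc_def /= expr0n addr0 sqrtr_sqr ltcR.
Qed.

End Hermitian.

Lemma sum_cos_sin_period (R : realType) (a : R) (n k : nat) :
  sin (a / 2) != 0 -> a * n%:R = pi *+ 2 *+ k ->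
  \sum_(j < n) cos (a * j%:R) = 0 /\ \sum_(j < n) sin (a * j%:R) = 0.
Proof.
(* 2 sin h cos (a j) and 2 sin h sin (a j) are the increments of sin (a j - h) and
   -cos (a j - h), which take the same value at j = 0 and j = n as a n is in 2 pi Z. *)
move=> sin_neq0 an; set h := a / 2.
have telescope (g : R -> R) : periodic g (pi *+ 2) ->
    \sum_(j < n) (g (a * j.+1%:R - h) - g (a * j%:R - h)) = 0.
  move=> g_per.
  rewrite -(big_mkord xpredT (fun j => g (a * j.+1%:R - h) - g (a * j%:R - h))).
  rewrite (@telescope_sumr _ 0 n (fun j => g (a * j%:R - h))) // an mulr0 add0r.
  by rewrite [_ - h]addrC periodicn // subrr.
have shift j : a * j.+1%:R - h = a * j%:R + h by rewrite -addn1 natrD /h; field.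
have [sc ss] : (sin h *+ 2) * \sum_(j < n) cos (a * j%:R) = 0 /\
               (sin h *+ 2) * \sum_(j < n) sin (a * j%:R) = 0.
  split; rewrite mulr_sumr.
    rewrite -[RHS](telescope _ (@sinD2pi R)); apply: eq_bigr => j _.
    by rewrite shift sinD sinB mulr2n; ring.
  rewrite -[RHS]oppr0 -[in RHS](telescope _ (@cosD2pi R)) -sumrN; apply: eq_bigr => j _.
  by rewrite shift cosD cosB mulr2n; ring.
have sin2_neq0 : sin h *+ 2 != 0 by rewrite mulrn_eq0.
by move: sc ss => /eqP + /eqP; rewrite !mulf_eq0 (negbTE sin2_neq0) /= => /eqP -> /eqP ->.
Qed.

Lemma sum_periodic_shift (V : nmodType) n (f : nat -> V) c :
  (forall k, f (k + n)%N = f k) -> \sum_(k < n) f (k + c)%N = \sum_(k < n) f k.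
Proof.
case: n => [|n] f_per; first by rewrite !big_ord0.
elim: c => [|c IHc]; first by apply: eq_bigr => k _; rewrite addn0.
rewrite -[RHS]IHc big_ord_recr big_ord_recl /= addrC.
rewrite (_ : (n + c.+1 = 0 + c + n.+1)%N) ?f_per; last by lia.
by congr (_ + _); apply: eq_bigr => k _; rewrite /bump /= add1n addnS addSn.
Qed.

Section Qn.
Variables (R : realType) (n : nat) (d : nat -> R) (lam : R).
Hypothesis n_ge3 : (3 <= n)%N.

Definition cos_root (k : nat) : R := cos (2 * k%:R * pi / n%:R).
Definition sin_root (k : nat) : R := sin (2 * k%:R * pi / n%:R).

Lemma natr_n_gt0 : (0 : R) < n%:R.
Proof. by rewrite ltr0n; case: n n_ge3. Qed.

Lemma sin_pi_div_gt0 (k : nat) : (0 < k < n)%N -> 0 < sin (k%:R * pi / n%:R) :> R.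
Proof.
case/andP => k_gt0 k_lt_n; apply: sin_gt0_pi.
rewrite divr_gt0 ?mulr_gt0 ?pi_gt0 ?natr_n_gt0 ?ltr0n //=.
by rewrite ltr_pdivrMr ?natr_n_gt0 // mulrC ltr_pM2l ?pi_gt0 // ltr_nat.
Qed.

Lemma sum_cos_sin_root :
  \sum_(j < n) cos_root j = 0 /\ \sum_(j < n) sin_root j = 0.
Proof.
have n_neq0 : n%:R != 0 :> R by rewrite lt0r_neq0 ?natr_n_gt0.
have [] := @sum_cos_sin_period R (2 * pi / n%:R) n 1.
- rewrite gt_eqF // (_ : _ / 2 = 1%:R * pi / n%:R); last by field.
  by rewrite sin_pi_div_gt0 // (leq_trans _ n_ge3).
- by rewrite mulfVK // mulr_natl.
move=> sum_cos sum_sin; split.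
  by rewrite -[RHS]sum_cos; apply: eq_bigr => j _; rewrite /cos_root; congr cos; field.
by rewrite -[RHS]sum_sin; apply: eq_bigr => j _; rewrite /sin_root; congr sin; field.
Qed.

Lemma sum_cos_sin_root_sqr :
  [/\ \sum_(j < n) cos_root j * cos_root j = n%:R / 2,
      \sum_(j < n) sin_root j * sin_root j = n%:R / 2 &
      \sum_(j < n) cos_root j * sin_root j = 0].
Proof.
have n_neq0 : n%:R != 0 :> R by rewrite lt0r_neq0 ?natr_n_gt0.
have [] := @sum_cos_sin_period R (4 * pi / n%:R) n 2.
- rewrite gt_eqF // (_ : _ / 2 = 2%:R * pi / n%:R); last by field.
  by rewrite sin_pi_div_gt0.
- by rewrite mulfVK // -mulrnA mulr_natl.
have double j : 4 * pi / n%:R * j%:R = (2 * j%:R * pi / n%:R) *+ 2.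
  by rewrite mulr2n; ring.
move=> sum_cos sum_sin.
have sum_c2 : \sum_(j < n) cos_root j * cos_root j = n%:R / 2.
  have : \sum_(j < n) ((cos_root j * cos_root j) *+ 2 - 1) = 0.
    by rewrite -[RHS]sum_cos; apply: eq_bigr => j _; rewrite double cos_mulr2n expr2.
  rewrite sumrB sumrMnl sumr_const card_ord => /eqP; rewrite subr_eq0 => /eqP c2.
  by rewrite -c2 mulr2n; field.
split => //.
  have s2 j : sin_root j * sin_root j = 1 - cos_root j * cos_root j.
    by rewrite -!expr2 sin2cos2.
  by under eq_bigr do rewrite s2; rewrite sumrB sum_c2 sumr_const card_ord; field.
have : (\sum_(j < n) cos_root j * sin_root j) *+ 2 = 0.
  by rewrite -sumrMnl -[RHS]sum_sin; apply: eq_bigr => j _; rewrite double sin_mulr2n.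
by move/eqP; rewrite mulrn_eq0 => /eqP.
Qed.

Definition trig_mx : 'M[R]_(n, 3) := \matrix_(i, k) [:: 1; cos_root i; sin_root i]`_k.

Lemma trig_gram :
  trig_mx^T *m trig_mx = diag_mx (\row_k [:: n%:R; n%:R / 2; n%:R / 2]`_k).
Proof.
have [sum_c sum_s] := sum_cos_sin_root.
have [sum_cc sum_ss sum_cs] := sum_cos_sin_root_sqr.
have sum_sc : \sum_(j < n) sin_root j * cos_root j = 0.
  by rewrite -[RHS]sum_cs; apply: eq_bigr => j _; rewrite mulrC.
apply/matrixP => k l; rewrite !mxE.
under eq_bigr => j _ do rewrite !mxE.
case: k => [[|[|[|//]]] ?]; case: l => [[|[|[|//]]] ?] /=;
  under eq_bigr do rewrite ?mul1r ?mulr1;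
  by rewrite ?sum_c ?sum_s ?sum_cc ?sum_ss ?sum_cs ?sum_sc ?sumr_const ?card_ord.
Qed.

Definition qdiag : 'rV[R]_n := \row_j (lam - 2 * n%:R * lam * alpha n d j).
Definition qbeta : 'M[R]_(3, n) :=
  \matrix_(k, j) ((k == 0 :> nat)%:R * ((1 - lam) * beta n d j)).
Definition qcoupling : 'M[R]_(n, 3) :=
  \matrix_(i, k) (2 * lam * alpha n d i * [:: 1; 2; 2]`_k * trig_mx i k).

Lemma Qmat_decomp :
  Qmat n d lam = diag_mx qdiag + trig_mx *m qbeta + qcoupling *m trig_mx^T.
Proof.
apply/matrixP => i j; rewrite !mxE !big_ord_recl !big_ord0 !mxE /=.
case: eqP => [<-|_].
  have s2 : sin_root i * sin_root i = 1 - cos_root i * cos_root i.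
    by rewrite -!expr2 sin2cos2.
  by rewrite -[_ * sin_root i * sin_root i]mulrA s2 mulr1n; ring.
have -> : ((j : int) - (i : int))%:~R = j%:R - i%:R :> R by rewrite intrB.
rewrite (_ : 2 * (j%:R - i%:R) * pi / n%:R
             = 2 * j%:R * pi / n%:R - 2 * i%:R * pi / n%:R); last by ring.
by rewrite cosB mulr0n /cos_root /sin_root; ring.
Qed.

Hypothesis d_gt0 : forall k, (k < n)%N -> 0 < d k.

Lemma dm_gt0 k : 0 < dm n d k.
Proof. by rewrite /dm d_gt0 // ltn_pmod //; case: n n_ge3. Qed.

Lemma dm_addn k : dm n d (k + n) = dm n d k.
Proof. by rewrite /dm modnDr. Qed.

Definition knot_prod (s k : nat) : R := dm n d k * dm n d (k + s).

Lemma knot_prod_addn s k : knot_prod s (k + n) = knot_prod s k.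
Proof. by rewrite /knot_prod dm_addn addnAC dm_addn. Qed.

Definition beta_num (i : nat) : R :=
  dm n d (i + n - 1) * (dm n d (i + n - 2) + dm n d (i + 2))
  + dm n d (i + 2) * (dm n d (i + n - 1) + dm n d (i + 3)).

(* Every index is written as a shift [i + c], the shape [sum_periodic_shift] expects. *)
Lemma beta_numE i :
  beta_num i
  = knot_prod 1 (i + (n - 2)) + knot_prod 3 (i + (n - 1)) *+ 2 + knot_prod 1 (i + 2).
Proof.
rewrite /beta_num /knot_prod (_ : (i + (n - 1) + 3 = i + 2 + n)%N); last by lia.
rewrite (_ : (i + (n - 2) + 1 = i + n - 1)%N); last by lia.
rewrite (_ : (i + (n - 2) = i + n - 2)%N); last by lia.
rewrite (_ : (i + (n - 1) = i + n - 1)%N); last by lia.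
by rewrite dm_addn -addnA; ring.
Qed.

Lemma beta_den_termE k :
  (dm n d k + dm n d (k + 2)) * (dm n d (k + n - 1) + dm n d (k + 3))
  = knot_prod 1 (k + (n - 1)) + knot_prod 3 k + knot_prod 3 (k + (n - 1))
    + knot_prod 1 (k + 2).
Proof.
rewrite /knot_prod (_ : (k + (n - 1) + 1 = k + n)%N); last by lia.
rewrite (_ : (k + (n - 1) + 3 = k + 2 + n)%N); last by lia.
rewrite (_ : (k + (n - 1) = k + n - 1)%N); last by lia.
by rewrite !dm_addn -addnA; ring.
Qed.

Lemma sum_beta_num : \sum_(i < n) beta_num i = beta_den n d.
Proof.
rewrite /beta_den; under eq_bigr do rewrite beta_numE.
under [RHS]eq_bigr do rewrite beta_den_termE.
by rewrite !big_split /= !(sum_periodic_shift _ (knot_prod_addn _)); ring.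
Qed.

Lemma beta_den_gt0 : 0 < beta_den n d.
Proof.
have term_gt0 k :
    0 < (dm n d k + dm n d (k + 2)) * (dm n d (k + n - 1) + dm n d (k + 3)).
  by rewrite mulr_gt0 // addr_gt0 // dm_gt0.
rewrite /beta_den (bigD1 (Ordinal (ltnW (ltnW n_ge3)))) //=.
by rewrite ltr_wpDr ?term_gt0 // sumr_ge0 // => k _; rewrite ltW.
Qed.

Lemma sum_beta : \sum_(j < n) beta n d j = 1.
Proof.
by rewrite /beta -mulr_suml sum_beta_num mulfV // lt0r_neq0 // beta_den_gt0.
Qed.

Lemma alpha_bounds j : 0 < alpha n d j /\ n%:R * alpha n d j < 1.
Proof.
rewrite /alpha.
have a_gt0 := dm_gt0 (j + n - 1); set a := dm n d (j + n - 1) in a_gt0 *.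
have b_gt0 := dm_gt0 (j + 2); set b := dm n d (j + 2) in b_gt0 *.
have c_gt0 := dm_gt0 (j + 1); set c := dm n d (j + 1) in c_gt0 *.
have e_gt0 := dm_gt0 j; set e := dm n d j in e_gt0 *.
have den_gt0 : 0 < (a + c) * (e + b) by rewrite mulr_gt0 ?addr_gt0.
split; first by rewrite divr_gt0 ?mulr_gt0 ?invr_gt0 ?natr_n_gt0 ?addr_gt0.
have n_neq0 : n%:R != 0 :> R by rewrite lt0r_neq0 ?natr_n_gt0.
rewrite mulrA mulrA mulfV // mul1r ltr_pdivrMr // mul1r.
have : 0 < a * e + c * e + c * b by rewrite !addr_gt0 ?mulr_gt0.
by rewrite (_ : (a + c) * (e + b) = a * b + (a * e + c * e + c * b)); [lra | ring].
Qed.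

Lemma qdiag_bound : 0 < lam -> forall j, `|qdiag 0 j| < lam.
Proof.
move=> lam_gt0 j; have [al_gt0 nal_lt1] := alpha_bounds j.
rewrite mxE (_ : 2 * n%:R * lam * alpha n d j = 2 * (lam * (n%:R * alpha n d j)));
  last by ring.
have : 0 < lam * (n%:R * alpha n d j) by rewrite mulr_gt0 // mulr_gt0 // natr_n_gt0.
have : lam * (n%:R * alpha n d j) < lam by rewrite gtr_pMr.
by rewrite ltr_norml; lra.
Qed.

Definition qtri : 'M[R]_3 := lam%:M + qbeta *m trig_mx.

Lemma Qmat_trig_mx : Qmat n d lam *m trig_mx = trig_mx *m qtri.
Proof.
have diag_part : diag_mx qdiag *m trig_mx + qcoupling *m (trig_mx^T *m trig_mx)
    = lam *: trig_mx.
  apply/matrixP => i k; rewrite trig_gram mul_diag_mx mul_mx_diag !mxE.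
  have n_neq0 : n%:R != 0 :> R by rewrite lt0r_neq0 ?natr_n_gt0.
  by case: k => [[|[|[|//]]] ?] /=; field.
rewrite Qmat_decomp !mulmxDl -!mulmxA addrAC diag_part.
by rewrite -mul_mx_scalar -mulmxDr.
Qed.

Lemma char_poly_qtri : char_poly qtri = ('X - 1) * ('X - lam%:P) ^+ 2.
Proof.
rewrite -char_poly_trmx char_poly_trig; last first.
  apply/is_trig_mxP => k l lt_kl; rewrite !mxE -val_eqE /= gtn_eqF // add0r.
  rewrite big1 // => j _.
  by rewrite mxE (gtn_eqF (leq_ltn_trans (leq0n k) lt_kl)) !mul0r.
rewrite !big_ord_recl big_ord0 mulr1 !mxE /= !mulr1n.
rewrite (eq_bigr (fun j : 'I_n => (1 - lam) * beta n d j)) => [|j _]; last first.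
  by rewrite !mxE mul1r mulr1.
rewrite -mulr_sumr sum_beta mulr1 addrC subrK !big1 => [|j _|j _];
  try by rewrite !mxE !mul0r.
by rewrite addr0 polyC1.
Qed.

Lemma det_trig_top :
  \det (\matrix_(i < 3, k < 3) [:: 1; cos_root i; sin_root i]`_k) != 0.
Proof.
rewrite (det_mx33 (fun i k => [:: 1; cos_root i; sin_root i]`_k)) /=.
have c0 : cos_root 0 = 1 by rewrite /cos_root mulr0 !mul0r cos0.
have s0 : sin_root 0 = 0 by rewrite /sin_root mulr0 !mul0r sin0.
have double : 2 * 2%:R * pi / n%:R = (2 * 1%:R * pi / n%:R) *+ 2 :> R.
  by rewrite mulr2n; ring.
have c2 : cos_root 2 = cos_root 1 ^+ 2 *+ 2 - 1 by rewrite /cos_root double cos_mulr2n.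
have s2 : sin_root 2 = (cos_root 1 * sin_root 1) *+ 2.
  by rewrite /sin_root /cos_root double sin_mulr2n.
have s1_gt0 : 0 < sin_root 1.
  by rewrite /sin_root mulr1 sin_pi_div_gt0 // (leq_trans _ n_ge3).
have c1_lt1 : cos_root 1 < 1.
  rewrite lt_neqAle cos_le1 andbT; apply: contraTneq s1_gt0 => c1.
  have : sin_root 1 ^+ 2 == 0 by rewrite sin2cos2 -/(cos_root 1) c1 expr1n subrr.
  by rewrite sqrf_eq0 => /eqP ->; rewrite ltxx.
rewrite c0 s0 c2 s2 !mulr2n; apply: lt0r_neq0.
rewrite (_ : _ - _ + _ = 2 * sin_root 1 * (1 - cos_root 1)); last by ring.
by rewrite !mulr_gt0 // subr_gt0.
Qed.

End Qn.

Unset Implicit Arguments.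

Theorem lemma1 (R : realType) (n : nat) (d : nat -> R) (lam : R)
    (hn : (3 <= n)%N) (hd : forall k, (k < n)%N -> 0 < d k)
    (hl1 : 1 / 4 < lam) (hl2 : lam < 1) :
  exists p : {poly R},
    char_poly (Qmat n d lam) = ('X - 1) * ('X - lam%:P) ^+ 2 * p /\
    forall z : R[i], root (map_poly (fun x : R => x%:C%C) p) z ->
      `|z| < lam%:C%C.
Proof.
have lam_gt0 : 0 < lam by lra.
case: n hn hd => [|[|[|m]]] // hn hd.
have top_det : \det (usubmx (trig_mx R m.+3 : 'M_(3 + m, 3))) != 0.
  rewrite (_ : usubmx _
               = \matrix_(i < 3, k < 3) [:: 1; cos_root R m.+3 i; sin_root R m.+3 i]`_k).
    exact: det_trig_top.
  by apply/matrixP => i k; rewrite !mxE.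
have [B [charQ rootB]] :=
  char_poly_invariant_split (real_complex R) top_det (Qmat_trig_mx d lam hn).
exists (char_poly B); split; first by rewrite charQ char_poly_qtri.
move=> z /rootB [u u_neq0 [uQ uV]]; rewrite Qmat_decomp in uQ.
exact: annihilator_eigenvalue_lt (qdiag_bound hn hd lam_gt0) u_neq0 uV uQ.
Qed.
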